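(* Suppose $h$ satisfies: there are $\alpha_h\in(0,2]$, $C_h\ge1$, $\theta_h\in(0,\infty]$ with $h(r)\le C_h\lambda^{\alpha_h}h(\lambda r)$ for all $\lambda\le1$, $r<\theta_h$. Let $\mathfrak h:(0,\infty)\to(0,\infty)$ be non-increasing with $\lambda^{\alpha_{\mathfrak h}}\mathfrak h(\lambda t)\le c_{\mathfrak h}\mathfrak h(t)$ for all $\lambda\le1$, $t<\theta_{\mathfrak h}$, for some $\alpha_{\mathfrak h}\le1$, $c_{\mathfrak h}\ge1$, $\theta_{\mathfrak h}\in(0,\infty]$. Then there is $c$ depending only on $d,\alpha_h,C_h,\alpha_{\mathfrak h},c_{\mathfrak h}$ such that for all $s,t>0$ with $s+t<(1/h(\theta_h))\wedge\theta_{\mathfrak h}$ and all $x,y\in\mathbb{R}^d$, $\mathfrak h(s)\rho_s(x)\wedge\mathfrak h(t)\rho_t(y)\le c\,\mathfrak h(s+t)\rho_{s+t}(x+y)$. In particular (taking $\mathfrak h\equiv1$), there is $c=c(d,\alpha_h,C_h)$ with $\rho_s(x)\wedge\rho_t(y)\le c\,\rho_{s+t}(x+y)$ for $s+t<1/h(\theta_h)$.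
   Context: Let $d\in\mathbb{N}$ and let $\nu:[0,\infty)\to[0,\infty]$ be non-increasing with $\int_{\mathbb{R}^d}(1\wedge|x|^2)\nu(|x|)\,dx<\infty$. For $r>0$ let $h(r)=\int_{\mathbb{R}^d}\big(1\wedge \tfrac{|x|^2}{r^2}\big)\nu(|x|)\,dx$ and $K(r)=r^{-2}\int_{|x|<r}|x|^2\nu(|x|)\,dx$; assume $h(0^+)=\infty$, so $h$ is a continuous strictly decreasing bijection of $(0,\infty)$ onto $(0,\infty)$ with inverse $h^{-1}$; $1/h(\infty):=\infty$. Bound function: $\rho_t(x)=[h^{-1}(1/t)]^{-d}\wedge \frac{tK(|x|)}{|x|^d}$ for $t>0$, $x\in\mathbb{R}^d$. *)

From Stdlib Require Import Reals Lra.
Open Scope R_scope.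

(* Points of R^d: functions nat -> R, only coordinates 0..d-1 matter. *)
Definition vec := nat -> R.
Definition vnorm (d : nat) (x : vec) : R :=
  sqrt (sum_f_R0 (fun i => x i ^ 2) (pred d)).
Definition vadd (x y : vec) : vec := fun i => x i + y i.

Fixpoint ball_vol (n : nat) : R :=
  match n with
  | O => 1
  | S O => 2
  | S (S m) => 2 * PI / INR (S (S m)) * ball_vol m
  end.
Definition sphere_area (d : nat) : R := INR d * ball_vol d.

Definition int_ab (g : R -> R) (a b I : R) : Prop :=
  exists pr : Riemann_integrable g a b, RiemannInt pr = I.

(* Improper integral over (0,oo) of a nonnegative function, equal to L (finite). *)
Definition IntOn0Inf (g : R -> R) (L : R) : Prop :=
  (forall a b, 0 < a -> a <= b -> exists I, int_ab g a b I) /\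
  is_lub (fun I => exists a b, 0 < a /\ a <= b /\ int_ab g a b I) L.

Definition IntOn0 (g : R -> R) (r L : R) : Prop :=
  (forall a, 0 < a -> a <= r -> exists I, int_ab g a r I) /\
  is_lub (fun I => exists a, 0 < a /\ a <= r /\ int_ab g a r I) L.

(* Extended positive reals (0,oo]: None = oo. *)
Definition ext_pos (th : option R) : Prop :=
  match th with None => True | Some a => 0 < a end.
Definition ext_lt (r : R) (th : option R) : Prop :=
  match th with None => True | Some a => r < a end.
(* 1/h(theta), with 1/h(oo) := oo *)
Definition inv_h_at (h : R -> R) (th : option R) : option R :=
  match th with None => None | Some a => Some (/ h a) end.

(* Standing assumptions: nu radial profile, h and K its functions
   (integrals over R^d written in polar coordinates), h(0+) = oo, hinv = h^{-1}. *)
Definition LevySetting (d : nat) (nu h K hinv : R -> R) : Prop :=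
  (1 <= d)%nat /\
  (forall r, 0 < r -> 0 <= nu r) /\
  (forall r1 r2, 0 < r1 -> r1 <= r2 -> nu r2 <= nu r1) /\
  (forall r, 0 < r ->
     IntOn0Inf (fun s => sphere_area d * Rmin 1 (s ^ 2 / r ^ 2) * nu s * s ^ (d - 1)) (h r)) /\
  (forall r, 0 < r ->
     IntOn0 (fun s => sphere_area d * s ^ 2 * nu s * s ^ (d - 1) / r ^ 2) r (K r)) /\
  (forall M, exists r, 0 < r /\ M < h r) /\
  (forall u, 0 < u -> 0 < hinv u /\ h (hinv u) = u).

(* rho_t(x) = [h^{-1}(1/t)]^{-d} /\ t K(|x|)/|x|^d  (= first term when x = 0) *)
Definition rho (d : nat) (K hinv : R -> R) (t : R) (x : vec) : R :=
  let r := vnorm d x in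
  let A := / (hinv (/ t)) ^ d in
  if Req_EM_T r 0 then A else Rmin A (t * K r / r ^ d).

Definition h_scaling (h : R -> R) (al C : R) (th : option R) : Prop :=
  forall lam r, 0 < lam -> lam <= 1 -> 0 < r -> ext_lt r th ->
    h r <= C * Rpower lam al * h (lam * r).

Definition frak_cond (f : R -> R) (al c : R) (th : option R) : Prop :=
  (forall t, 0 < t -> 0 < f t) /\
  (forall t1 t2, 0 < t1 -> t1 <= t2 -> f t2 <= f t1) /\
  (forall lam t, 0 < lam -> lam <= 1 -> 0 < t -> ext_lt t th ->
     Rpower lam al * f (lam * t) <= c * f t).

(* Put T = s + t and z = x + y.  Since rho_T(z) is the minimum of the cap
   [h^{-1}(1/T)]^{-d} and the tail T K(|z|)/|z|^d, it suffices to bound the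
   left-hand side by a multiple of each.  For the cap use whichever of s, t is
   at least T/2: lower scaling of h gives h^{-1}(1/T) <= (2 C_h)^{1/alpha_h}
   h^{-1}(1/u), and scaling of frak h gives frak h(u) <= 2 c frak h(T).  For
   the tail use whichever of x, y has norm at least |z|/2: as nu is
   non-increasing, K(r)/r^d is non-increasing and r^2 K(r) non-decreasing, so
   K(|x|)/|x|^d <= 2^(d+2) K(|z|)/|z|^d, while s frak h(s) <= c T frak h(T). *)

From Stdlib Require Import Reals Lra Lia.
From Coquelicot Require Import Coquelicot.
Open Scope R_scope.

Lemma int_ab_RInt g a b I : int_ab g a b I -> ex_RInt g a b /\ RInt g a b = I.
Proof.
  intros [pr <-]; split; [apply ex_RInt_Reals_1; exact pr | apply RInt_Reals].
Qed.

Lemma RInt_scal_R (f : R -> R) a b c :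
  ex_RInt f a b ->
  ex_RInt (fun x => c * f x) a b /\ RInt (fun x => c * f x) a b = c * RInt f a b.
Proof. intros E; split; [exact (ex_RInt_scal f a b c E) | exact (RInt_scal f a b c E)]. Qed.

Lemma RInt_dilate (f : R -> R) r a b :
  ex_RInt f (r * a) (r * b) ->
  ex_RInt (fun u => r * f (r * u)) a b /\
  RInt (fun u => r * f (r * u)) a b = RInt f (r * a) (r * b).
Proof.
  intros E.
  assert (E0 : ex_RInt f (r * a + 0) (r * b + 0)) by (rewrite !Rplus_0_r; exact E).
  pose proof (ex_RInt_comp_lin f r 0 a b E0) as Ex.
  pose proof (RInt_comp_lin f r 0 a b E0) as Eq.
  rewrite !Rplus_0_r in Eq.
  split.
  - eapply ex_RInt_ext; [| exact Ex]; intros u _; simpl; rewrite Rplus_0_r; reflexivity.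
  - rewrite <- Eq; apply RInt_ext; intros u _; simpl; rewrite Rplus_0_r; reflexivity.
Qed.

Lemma IntOn0Inf_le g1 g2 L1 L2 :
  IntOn0Inf g1 L1 -> IntOn0Inf g2 L2 -> (forall s, 0 < s -> g1 s <= g2 s) -> L1 <= L2.
Proof.
  intros [_ [_ lub1]] [ex2 [ub2 _]] Hg.
  apply lub1; intros I (a & b & Ha & Hab & HI).
  destruct (ex2 a b Ha Hab) as [J HJ].
  apply Rle_trans with J; [| apply ub2; exists a, b; auto].
  apply int_ab_RInt in HI as [E1 <-]; apply int_ab_RInt in HJ as [E2 <-].
  apply RInt_le; auto; intros s Hs; apply Hg; lra.
Qed.

Lemma IntOn0_ge0 g r L : 0 < r -> IntOn0 g r L -> 0 <= L.
Proof.
  intros Hr [ex [ub _]].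
  destruct (ex r Hr (Rle_refl r)) as [I HI].
  assert (I = 0) by (apply int_ab_RInt in HI as [_ <-]; exact (RInt_point r g)).
  subst I; apply ub; exists r; repeat split; auto; lra.
Qed.

Lemma IntOn0_le_scal g1 g2 r1 r2 L1 L2 c :
  0 <= c -> r1 <= r2 -> IntOn0 g1 r1 L1 -> IntOn0 g2 r2 L2 ->
  (forall s, 0 < s -> s <= r2 -> 0 <= g2 s) ->
  (forall s, 0 < s -> s <= r1 -> g1 s <= c * g2 s) -> L1 <= c * L2.
Proof.
  intros Hc H12 [_ [_ lub1]] [ex2 [ub2 _]] Hg2 Hg.
  apply lub1; intros I (a & Ha & Har & HI).
  destruct (ex2 a Ha ltac:(lra)) as [J HJ].
  assert (HJ2 : J <= L2) by (apply ub2; exists a; repeat split; auto; lra).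
  apply int_ab_RInt in HI as [E1 <-]; apply int_ab_RInt in HJ as [E2 <-].
  assert (Ea : ex_RInt g2 a r1) by (apply (ex_RInt_Chasles_1 g2 a r1 r2); [split; lra | exact E2]).
  assert (Eb : ex_RInt g2 r1 r2) by (apply (ex_RInt_Chasles_2 g2 a r1 r2); [split; lra | exact E2]).
  assert (Hsplit : RInt g2 a r1 + RInt g2 r1 r2 = RInt g2 a r2)
    by exact (RInt_Chasles g2 a r1 r2 Ea Eb).
  assert (Htail : 0 <= RInt g2 r1 r2) by (apply RInt_ge_0; auto; intros s Hs; apply Hg2; lra).
  destruct (RInt_scal_R g2 a r1 c Ea) as [Ec Hc'].
  apply Rle_trans with (RInt (fun s => c * g2 s) a r1).
  - apply RInt_le; auto; intros s Hs; apply Hg; lra.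
  - rewrite Hc'; apply Rmult_le_compat_l; lra.
Qed.

Lemma IntOn0_rescale g1 g2 r1 r2 L1 L2 c :
  0 < r1 -> 0 < r2 -> 0 <= c -> IntOn0 g1 r1 L1 -> IntOn0 g2 r2 L2 ->
  (forall u, 0 < u -> u <= 1 -> r2 * g2 (r2 * u) <= c * (r1 * g1 (r1 * u))) ->
  L2 <= c * L1.
Proof.
  intros Hr1 Hr2 Hc [ex1 [ub1 _]] [_ [_ lub2]] Hg.
  apply lub2; intros I (a & Ha & Har & HI).
  set (b := a / r2).
  assert (Hab : a = r2 * b) by (unfold b; field; lra).
  assert (Hb : 0 < b <= 1) by (split; nra).
  rewrite Hab in HI.
  destruct (ex1 (r1 * b)) as [J HJ]; [nra | nra |].
  assert (HJ1 : J <= L1) by (apply ub1; exists (r1 * b); repeat split; auto; nra).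
  apply int_ab_RInt in HI as [E2 <-]; apply int_ab_RInt in HJ as [E1 <-].
  rewrite <- (Rmult_1_r r2) in E2 at 2; rewrite <- (Rmult_1_r r1) in E1 at 2.
  destruct (RInt_dilate g2 r2 b 1 E2) as [F2 Eq2].
  destruct (RInt_dilate g1 r1 b 1 E1) as [F1 Eq1].
  rewrite Rmult_1_r in Eq1, Eq2; rewrite <- Eq1 in HJ1; rewrite <- Eq2.
  destruct (RInt_scal_R _ b 1 c F1) as [F1c Hc1].
  apply Rle_trans with (RInt (fun u => c * (r1 * g1 (r1 * u))) b 1).
  - apply RInt_le; auto; [lra | intros u Hu; apply Hg; lra].
  - rewrite Hc1; apply Rmult_le_compat_l; lra.
Qed.

Lemma ball_vol_pos n : 0 < ball_vol n.
Proof.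
  enough (H : 0 < ball_vol n /\ 0 < ball_vol (S n)) by apply H.
  induction n as [|n [IH1 IH2]]; [simpl; lra |].
  split; [exact IH2 |].
  change (ball_vol (S (S n))) with (2 * PI / INR (S (S n)) * ball_vol n).
  pose proof PI_RGT_0; pose proof (lt_0_INR (S (S n)) ltac:(lia)).
  apply Rmult_lt_0_compat; [apply Rdiv_lt_0_compat |]; lra.
Qed.

Lemma sphere_area_ge0 d : 0 <= sphere_area d.
Proof. apply Rmult_le_pos; [apply pos_INR | left; apply ball_vol_pos]. Qed.

Lemma Rpower_Rinv x y : 0 < x -> Rpower (/ x) y = / Rpower x y.
Proof.
  intros Hx; unfold Rpower; rewrite ln_Rinv, <- exp_Ropp by exact Hx; f_equal; ring.
Qed.

Lemma Rpower_ge_base x a : 0 < x <= 1 -> a <= 1 -> x <= Rpower x a.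
Proof.
  intros Hx Ha; unfold Rpower; rewrite <- (exp_ln x) at 1 by lra.
  assert (Hln0 : ln x <= 0) by (rewrite <- ln_1; apply ln_le; lra).
  assert (Hln : ln x <= a * ln x) by (assert (0 <= (1 - a) * - ln x) by (apply Rmult_le_pos; lra); lra).
  destruct (Rle_lt_or_eq_dec _ _ Hln) as [Hlt | Heq];
    [left; apply exp_increasing, Hlt | right; f_equal; exact Heq].
Qed.

Lemma vnorm_ge0 d x : 0 <= vnorm d x.
Proof. apply sqrt_pos. Qed.

Lemma vnorm_vadd_sqr_le d x y :
  vnorm d (vadd x y) ^ 2 <= 2 * vnorm d x ^ 2 + 2 * vnorm d y ^ 2.
Proof.
  assert (Hsq : forall v : vec, 0 <= sum_f_R0 (fun i => v i ^ 2) (pred d))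
    by (intros v; apply cond_pos_sum; intros i; apply pow2_ge_0).
  unfold vnorm, vadd; rewrite !pow2_sqrt by apply Hsq.
  rewrite !scal_sum, <- plus_sum; apply sum_Rle; intros i _.
  pose proof (pow2_ge_0 (x i - y i)); nra.
Qed.

Lemma vnorm_vadd_half_le d x y :
  vnorm d (vadd x y) / 2 <= vnorm d x \/ vnorm d (vadd x y) / 2 <= vnorm d y.
Proof.
  pose proof (vnorm_vadd_sqr_le d x y).
  pose proof (vnorm_ge0 d x); pose proof (vnorm_ge0 d y); pose proof (vnorm_ge0 d (vadd x y)).
  destruct (Rle_or_lt (vnorm d (vadd x y) / 2) (vnorm d x)); [now left |].
  destruct (Rle_or_lt (vnorm d (vadd x y) / 2) (vnorm d y)); [now right |].
  nra.
Qed.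

Lemma rho_le_cap d K hinv t x : rho d K hinv t x <= / hinv (/ t) ^ d.
Proof. unfold rho; destruct Req_EM_T; [lra | apply Rmin_l]. Qed.

Lemma rho_le_tail d K hinv t x :
  vnorm d x <> 0 -> rho d K hinv t x <= t * K (vnorm d x) / vnorm d x ^ d.
Proof. intros Hx; unfold rho; destruct Req_EM_T; [contradiction | apply Rmin_r]. Qed.

Lemma le_scal_rho d K hinv t z k L :
  L <= k * / hinv (/ t) ^ d ->
  (vnorm d z <> 0 -> L <= k * (t * K (vnorm d z) / vnorm d z ^ d)) ->
  L <= k * rho d K hinv t z.
Proof. intros Hcap Htail; unfold rho; destruct Req_EM_T; [| unfold Rmin; destruct Rle_dec]; auto. Qed.

Section FrakH.
Variables (f : R -> R) (af cf : R) (thf : option R).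
Hypotheses (Hf : frak_cond f af cf thf) (Haf : af <= 1).

Lemma frak_mul_le s T : 0 < s -> s <= T -> ext_lt T thf -> s * f s <= cf * (T * f T).
Proof.
  destruct Hf as [Fpos [_ Fscale]]; intros Hs HsT HT.
  assert (Hl : 0 < s / T <= 1)
    by (split; [apply Rdiv_lt_0_compat | apply (Rdiv_le_1 s T)]; lra).
  pose proof (Fscale (s / T) T (proj1 Hl) (proj2 Hl) ltac:(lra) HT) as S.
  replace (s / T * T) with s in S by (field; lra).
  pose proof (Rpower_ge_base (s / T) af Hl Haf); pose proof (Fpos s Hs).
  replace (s * f s) with (T * (s / T * f s)) by (field; lra).
  replace (cf * (T * f T)) with (T * (cf * f T)) by ring.
  apply Rmult_le_compat_l; nra.
Qed.

Lemma frak_le_half u T : 0 <= cf -> 0 < u -> T / 2 <= u <= T -> ext_lt T thf -> f u <= 2 * cf * f T.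
Proof.
  intros Hcf Hu HuT HT.
  pose proof (frak_mul_le u T Hu ltac:(lra) HT); pose proof (proj1 Hf T ltac:(lra)).
  apply Rmult_le_reg_l with u; [exact Hu |].
  assert (0 <= cf * f T) by (apply Rmult_le_pos; lra).
  nra.
Qed.

End FrakH.

Section Levy.
Variables (d : nat) (nu h K hinv : R -> R).
Hypothesis LS : LevySetting d nu h K hinv.

Lemma h_antitone r1 r2 : 0 < r1 -> r1 <= r2 -> h r2 <= h r1.
Proof.
  destruct LS as (_ & Hnu & _ & Hh & _); intros H1 H12.
  apply (IntOn0Inf_le _ _ _ _ (Hh r2 ltac:(lra)) (Hh r1 H1)); intros s Hs.
  assert (Hq : s ^ 2 / r2 ^ 2 <= s ^ 2 / r1 ^ 2).
  { apply Rmult_le_compat_l; [apply pow2_ge_0 |].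
    apply Rinv_le_contravar; [apply pow_lt | apply pow_incr]; lra. }
  apply Rmult_le_compat_r; [apply pow_le; lra |].
  apply Rmult_le_compat_r; [apply Hnu; exact Hs |].
  apply Rmult_le_compat_l; [apply sphere_area_ge0 | apply Rle_min_compat_l, Hq].
Qed.

Lemma K_div_pow_ge0 r : 0 < r -> 0 <= K r / r ^ d.
Proof.
  destruct LS as (_ & _ & _ & _ & HK & _); intros Hr.
  apply Rmult_le_pos; [exact (IntOn0_ge0 _ _ _ Hr (HK r Hr)) | left; apply Rinv_0_lt_compat, pow_lt, Hr].
Qed.

Lemma sqr_mul_K_le r1 r2 : 0 < r1 -> r1 <= r2 -> r1 ^ 2 * K r1 <= r2 ^ 2 * K r2.
Proof.
  destruct LS as (_ & Hnu & _ & _ & HK & _); intros H1 H12.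
  assert (Hp1 : 0 < r1 ^ 2) by (apply pow_lt; lra).
  assert (Hp2 : 0 < r2 ^ 2) by (apply pow_lt; lra).
  assert (HK12 : K r1 <= r2 ^ 2 / r1 ^ 2 * K r2).
  { apply (IntOn0_le_scal _ _ r1 r2 _ _ (r2 ^ 2 / r1 ^ 2) ltac:(left; apply Rdiv_lt_0_compat; lra) H12
             (HK r1 H1) (HK r2 ltac:(lra))).
    - intros s Hs _; apply Rmult_le_pos; [| left; apply Rinv_0_lt_compat; exact Hp2].
      apply Rmult_le_pos; [| apply pow_le; lra].
      apply Rmult_le_pos; [| apply Hnu; exact Hs].
      apply Rmult_le_pos; [apply sphere_area_ge0 | apply pow2_ge_0].
    - intros s _ _; right; field; lra. }
  apply Rmult_le_compat_l with (r := r1 ^ 2) in HK12; [| lra].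
  replace (r1 ^ 2 * (r2 ^ 2 / r1 ^ 2 * K r2)) with (r2 ^ 2 * K r2) in HK12 by (field; lra).
  exact HK12.
Qed.

(* K(r)/r^d = int_0^1 |S^(d-1)| u^(d+1) nu(r u) du after the substitution s = r u. *)
Lemma K_div_pow_antitone r1 r2 : 0 < r1 -> r1 <= r2 -> K r2 / r2 ^ d <= K r1 / r1 ^ d.
Proof.
  destruct LS as (Hd & Hnu & Hnum & _ & HK & _); intros H1 H12.
  assert (Hp1 : 0 < r1 ^ d) by (apply pow_lt; lra).
  assert (Hp2 : 0 < r2 ^ d) by (apply pow_lt; lra).
  assert (Hdil : forall r u, 0 < r ->
            r * (sphere_area d * (r * u) ^ 2 * nu (r * u) * (r * u) ^ (d - 1) / r ^ 2)
            = r ^ d * (sphere_area d * u ^ 2 * u ^ (d - 1)) * nu (r * u)).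
  { intros r u Hr.
    replace (r ^ d) with (r * r ^ (d - 1)) by (rewrite tech_pow_Rmult; f_equal; lia).
    rewrite !Rpow_mult_distr; field; lra. }
  assert (HK21 : K r2 <= r2 ^ d / r1 ^ d * K r1).
  { apply (IntOn0_rescale _ _ r1 r2 _ _ (r2 ^ d / r1 ^ d) H1 ltac:(lra)
             ltac:(left; apply Rdiv_lt_0_compat; lra) (HK r1 H1) (HK r2 ltac:(lra))).
    intros u Hu Hu1; rewrite !Hdil by lra.
    replace (r2 ^ d / r1 ^ d * (r1 ^ d * (sphere_area d * u ^ 2 * u ^ (d - 1)) * nu (r1 * u)))
      with (r2 ^ d * (sphere_area d * u ^ 2 * u ^ (d - 1)) * nu (r1 * u)) by (field; lra).
    apply Rmult_le_compat_l; [| apply Hnum; nra].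
    apply Rmult_le_pos; [lra |].
    apply Rmult_le_pos; [| apply pow_le; lra].
    apply Rmult_le_pos; [apply sphere_area_ge0 | apply pow2_ge_0]. }
  replace (K r1 / r1 ^ d) with (r2 ^ d / r1 ^ d * K r1 / r2 ^ d) by (field; lra).
  unfold Rdiv at 1 3; apply Rmult_le_compat_r; [left; apply Rinv_0_lt_compat; exact Hp2 | exact HK21].
Qed.

Lemma K_div_pow_le q r : 0 < r -> r / 2 <= q -> K q / q ^ d <= 2 ^ (d + 2) * (K r / r ^ d).
Proof.
  intros Hr Hq.
  pose proof (K_div_pow_antitone (r / 2) q ltac:(lra) Hq) as Hanti.
  pose proof (sqr_mul_K_le (r / 2) r ltac:(lra) ltac:(lra)) as Hsqr.
  assert (Hpr : 0 < r ^ d) by (apply pow_lt; lra).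
  assert (Hhalf : K (r / 2) / (r / 2) ^ d = 2 ^ d * (K (r / 2) / r ^ d)).
  { unfold Rdiv; rewrite Rpow_mult_distr, pow_inv; field; split; apply pow_nonzero; lra. }
  rewrite Hhalf in Hanti.
  rewrite pow_add; apply Rle_trans with (1 := Hanti).
  rewrite Rmult_assoc; apply Rmult_le_compat_l; [apply pow_le; lra |].
  unfold Rdiv; rewrite <- Rmult_assoc.
  apply Rmult_le_compat_r; [left; apply Rinv_0_lt_compat; exact Hpr |].
  apply Rmult_le_reg_l with (r / 2 * (r / 2)); [nra |].
  simpl in Hsqr |- *; lra.
Qed.

Lemma hinv_inv_pos u : 0 < u -> 0 < hinv (/ u) /\ h (hinv (/ u)) = / u.
Proof. destruct LS as (_ & _ & _ & _ & _ & _ & Hinv); intros Hu; apply Hinv, Rinv_0_lt_compat, Hu. Qed.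

Lemma hinv_cap_pos u : 0 < u -> 0 < / hinv (/ u) ^ d.
Proof. intros Hu; apply Rinv_0_lt_compat, pow_lt, hinv_inv_pos, Hu. Qed.

Lemma hinv_inv_lt_theta thh T :
  ext_pos thh -> 0 < T -> ext_lt T (inv_h_at h thh) -> ext_lt (hinv (/ T)) thh.
Proof.
  destruct thh as [a |]; simpl; [intros Ha HT HTa | auto].
  destruct (hinv_inv_pos T HT) as [Hr Er].
  destruct (Rlt_or_le (hinv (/ T)) a) as [| Har]; [assumption | exfalso].
  (* With Rocq's [/ 0 = 0], [T < / h a] also rules out [h a = 0]. *)
  assert (Hha : 0 < h a).
  { destruct (Rle_or_lt (h a) 0) as [Hle |]; [exfalso | assumption].
    destruct (Rle_lt_or_eq_dec _ _ Hle) as [Hlt | Heq];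
      [pose proof (Rinv_lt_0_compat _ Hlt) | rewrite Heq, Rinv_0 in HTa]; lra. }
  assert (h a < / T).
  { rewrite <- (Rinv_inv (h a)); apply Rinv_lt_contravar; [| exact HTa].
    apply Rmult_lt_0_compat; [exact HT | apply Rinv_0_lt_compat, Hha]. }
  pose proof (h_antitone a (hinv (/ T)) Ha Har); lra.
Qed.

Lemma hinv_inv_le_Rpower ah Ch thh u T :
  h_scaling h ah Ch thh -> 0 < ah -> 1 <= Ch -> 0 < u <= T -> ext_lt (hinv (/ T)) thh ->
  hinv (/ T) <= Rpower (Ch * (T / u)) (/ ah) * hinv (/ u).
Proof.
  intros Hsc Hah HCh Hu Hth.
  destruct (hinv_inv_pos T ltac:(lra)) as [Hr Er]; destruct (hinv_inv_pos u ltac:(lra)) as [Hp Ep].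
  set (r := hinv (/ T)) in *; set (p := hinv (/ u)) in *; set (B := Ch * (T / u)).
  assert (HTu : 1 <= T / u) by (apply Rle_div_r; lra).
  assert (HB : 1 <= B) by (unfold B; nra).
  assert (Hah' : 0 < / ah) by (apply Rinv_0_lt_compat, Hah).
  destruct (Rle_or_lt r p) as [Hrp | Hpr].
  - assert (1 <= Rpower B (/ ah)) by (rewrite <- (Rpower_O B) by lra; apply Rle_Rpower; lra).
    nra.
  - set (lam := p / r).
    assert (Hlam : 0 < lam < 1) by (unfold lam; split; [apply Rdiv_lt_0_compat | apply Rlt_div_l]; lra).
    pose proof (Hsc lam r (proj1 Hlam) ltac:(lra) Hr Hth) as S.
    replace (lam * r) with p in S by (unfold lam; field; lra).
    rewrite Er, Ep in S.
    assert (HP : 0 < Rpower lam ah) by apply exp_pos.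
    assert (HPB : / Rpower lam ah <= B).
    { apply Rmult_le_reg_r with (Rpower lam ah); [exact HP |].
      rewrite Rinv_l by lra.
      apply Rmult_le_reg_r with (/ T); [apply Rinv_0_lt_compat; lra |].
      unfold B, Rdiv.
      replace (Ch * (T * / u) * Rpower lam ah * / T) with (Ch * Rpower lam ah * / u) by (field; lra).
      lra. }
    assert (Hinvlam : / lam <= Rpower B (/ ah)).
    { rewrite <- (Rpower_1 (/ lam)) by (apply Rinv_0_lt_compat; lra).
      rewrite <- (Rinv_r ah) by lra; rewrite <- Rpower_mult.
      apply Rle_Rpower_l; [lra |].
      rewrite Rpower_Rinv by lra; split; [apply Rinv_0_lt_compat, HP | exact HPB]. }
    replace r with (/ lam * p) by (unfold lam; field; lra).
    apply Rmult_le_compat_r; lra.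
Qed.

Lemma hinv_cap_le_half ah Ch thh u T :
  h_scaling h ah Ch thh -> 0 < ah -> 1 <= Ch -> T / 2 <= u <= T -> 0 < u -> ext_lt (hinv (/ T)) thh ->
  / hinv (/ u) ^ d <= Rpower (2 * Ch) (/ ah) ^ d * / hinv (/ T) ^ d.
Proof.
  intros Hsc Hah HCh HuT Hu Hth.
  pose proof (hinv_inv_le_Rpower ah Ch thh u T Hsc Hah HCh ltac:(lra) Hth) as Hle.
  destruct (hinv_inv_pos T ltac:(lra)) as [Hr _]; destruct (hinv_inv_pos u Hu) as [Hp _].
  assert (HM : Rpower (Ch * (T / u)) (/ ah) <= Rpower (2 * Ch) (/ ah)).
  { apply Rle_Rpower_l; [left; apply Rinv_0_lt_compat, Hah | split].
    - apply Rmult_lt_0_compat, Rdiv_lt_0_compat; lra.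
    - rewrite Rmult_comm; apply Rmult_le_compat_r; [lra |].
      apply Rle_div_l; lra. }
  assert (Hpow : hinv (/ T) ^ d <= (Rpower (2 * Ch) (/ ah) * hinv (/ u)) ^ d).
  { apply pow_incr; split; [lra |]. apply Rle_trans with (1 := Hle), Rmult_le_compat_r; lra. }
  rewrite Rpow_mult_distr in Hpow.
  assert (HrD : 0 < hinv (/ T) ^ d) by (apply pow_lt, Hr).
  assert (HpD : 0 < hinv (/ u) ^ d) by (apply pow_lt, Hp).
  assert (HMD : 0 < Rpower (2 * Ch) (/ ah) ^ d) by (apply pow_lt, exp_pos).
  apply Rmult_le_reg_r with (hinv (/ u) ^ d * hinv (/ T) ^ d); [nra |].
  replace (/ hinv (/ u) ^ d * (hinv (/ u) ^ d * hinv (/ T) ^ d)) with (hinv (/ T) ^ d) by (field; lra).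
  replace (Rpower (2 * Ch) (/ ah) ^ d * / hinv (/ T) ^ d * (hinv (/ u) ^ d * hinv (/ T) ^ d))
    with (Rpower (2 * Ch) (/ ah) ^ d * hinv (/ u) ^ d) by (field; lra).
  exact Hpow.
Qed.

Lemma frak_rho_le_cap ah Ch thh f af cf thf u T w :
  h_scaling h ah Ch thh -> 0 < ah -> 1 <= Ch -> frak_cond f af cf thf -> af <= 1 -> 0 <= cf ->
  0 < u -> T / 2 <= u <= T -> ext_lt (hinv (/ T)) thh -> ext_lt T thf ->
  f u * rho d K hinv u w <= 2 * cf * Rpower (2 * Ch) (/ ah) ^ d * f T * / hinv (/ T) ^ d.
Proof.
  intros Hsc Hah HCh Hf Haf Hcf Hu HuT Hth Htf.
  pose proof (hinv_cap_le_half ah Ch thh u T Hsc Hah HCh HuT Hu Hth) as Hcap.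
  pose proof (frak_le_half f af cf thf Hf Haf u T Hcf Hu HuT Htf) as Hfu.
  pose proof (proj1 Hf u Hu) as Hfu0.
  pose proof (hinv_cap_pos u Hu) as Hcap0.
  apply Rle_trans with (f u * / hinv (/ u) ^ d); [apply Rmult_le_compat_l; [lra | apply rho_le_cap] |].
  replace (2 * cf * Rpower (2 * Ch) (/ ah) ^ d * f T * / hinv (/ T) ^ d)
    with ((2 * cf * f T) * (Rpower (2 * Ch) (/ ah) ^ d * / hinv (/ T) ^ d)) by ring.
  apply Rmult_le_compat; lra.
Qed.

Lemma frak_rho_le_tail f af cf thf s T w r :
  frak_cond f af cf thf -> af <= 1 -> 0 < s -> s <= T -> ext_lt T thf -> 0 < r -> r / 2 <= vnorm d w ->
  f s * rho d K hinv s w <= cf * 2 ^ (d + 2) * f T * (T * K r / r ^ d).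
Proof.
  intros Hf Haf Hs HsT Htf Hr Hw.
  pose proof (frak_mul_le f af cf thf Hf Haf s T Hs HsT Htf) as Hsf.
  pose proof (K_div_pow_le (vnorm d w) r Hr Hw) as HKw.
  pose proof (proj1 Hf s Hs) as Hfs.
  pose proof (K_div_pow_ge0 (vnorm d w) ltac:(lra)) as HK0.
  apply Rle_trans with (f s * (s * K (vnorm d w) / vnorm d w ^ d)).
  { apply Rmult_le_compat_l; [lra | apply rho_le_tail; lra]. }
  replace (f s * (s * K (vnorm d w) / vnorm d w ^ d))
    with ((s * f s) * (K (vnorm d w) / vnorm d w ^ d)) by (unfold Rdiv; ring).
  replace (cf * 2 ^ (d + 2) * f T * (T * K r / r ^ d))
    with ((cf * (T * f T)) * (2 ^ (d + 2) * (K r / r ^ d))) by (unfold Rdiv; ring).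
  apply Rmult_le_compat; [nra | exact HK0 | exact Hsf | exact HKw].
Qed.

End Levy.

Lemma frak_min_rho_le_sum (d : nat) (ah Ch af cf : R) :
  0 < ah -> 1 <= Ch -> af <= 1 -> 1 <= cf ->
  exists c : R, 0 < c /\
    forall (nu h K hinv : R -> R) (thh : option R) (f : R -> R) (thf : option R),
      LevySetting d nu h K hinv ->
      ext_pos thh -> h_scaling h ah Ch thh ->
      ext_pos thf -> frak_cond f af cf thf ->
      forall (s t : R) (x y : vec), 0 < s -> 0 < t ->
        ext_lt (s + t) (inv_h_at h thh) -> ext_lt (s + t) thf ->
        Rmin (f s * rho d K hinv s x) (f t * rho d K hinv t y)
          <= c * f (s + t) * rho d K hinv (s + t) (vadd x y).
Proof.
  intros Hah HCh Haf Hcf.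
  set (Ccap := 2 * cf * Rpower (2 * Ch) (/ ah) ^ d); set (Ctail := cf * 2 ^ (d + 2)).
  assert (HCcap : 0 < Ccap) by (apply Rmult_lt_0_compat; [lra | apply pow_lt, exp_pos]).
  assert (HCtail : 0 < Ctail) by (apply Rmult_lt_0_compat; [lra | apply pow_lt; lra]).
  exists (Ccap + Ctail); split; [lra |].
  intros nu h K hinv thh f thf LS Hthh Hsc _ Hf s t x y Hs Ht Hth Htf.
  assert (HT : 0 < s + t) by lra.
  pose proof (hinv_inv_lt_theta d nu h K hinv LS thh (s + t) Hthh HT Hth) as Hr.
  pose proof (proj1 Hf (s + t) HT) as HfT.
  apply le_scal_rho.
  - pose proof (hinv_cap_pos d nu h K hinv LS (s + t) HT).
    apply Rle_trans with (Ccap * f (s + t) * / hinv (/ (s + t)) ^ d); [| apply Rmult_le_compat_r; nra].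
    destruct (Rle_or_lt t s);
      [apply Rle_trans with (1 := Rmin_l _ _) | apply Rle_trans with (1 := Rmin_r _ _)];
      eapply frak_rho_le_cap; eauto; lra.
  - set (z := vadd x y); intros Hz; pose proof (vnorm_ge0 d z).
    pose proof (K_div_pow_ge0 d nu h K hinv LS (vnorm d z) ltac:(lra)).
    assert (0 <= (s + t) * K (vnorm d z) / vnorm d z ^ d)
      by (unfold Rdiv; rewrite Rmult_assoc; apply Rmult_le_pos; lra).
    apply Rle_trans with (Ctail * f (s + t) * ((s + t) * K (vnorm d z) / vnorm d z ^ d));
      [| apply Rmult_le_compat_r; nra].
    destruct (vnorm_vadd_half_le d x y);
      [apply Rle_trans with (1 := Rmin_l _ _) | apply Rle_trans with (1 := Rmin_r _ _)];
      eapply frak_rho_le_tail; eauto; lra.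
Qed.

Lemma frak_cond_one : frak_cond (fun _ => 1) 1 1 None.
Proof.
  split; [intros; lra | split; [intros; lra |]].
  intros lam t Hlam Hlam1 _ _; rewrite Rpower_1 by exact Hlam; lra.
Qed.

Theorem mainTheorem15 :
  forall (d : nat) (ah Ch : R),
    (1 <= d)%nat -> 0 < ah -> ah <= 2 -> 1 <= Ch ->
    (forall (af cf : R), af <= 1 -> 1 <= cf ->
      exists c : R, 0 < c /\
        forall (nu h K hinv : R -> R) (thh : option R) (f : R -> R) (thf : option R),
          LevySetting d nu h K hinv ->
          ext_pos thh -> h_scaling h ah Ch thh ->
          ext_pos thf -> frak_cond f af cf thf ->
          forall (s t : R) (x y : vec), 0 < s -> 0 < t ->
            ext_lt (s + t) (inv_h_at h thh) -> ext_lt (s + t) thf ->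
            Rmin (f s * rho d K hinv s x) (f t * rho d K hinv t y)
              <= c * f (s + t) * rho d K hinv (s + t) (vadd x y))
    /\
    (exists c : R, 0 < c /\
        forall (nu h K hinv : R -> R) (thh : option R),
          LevySetting d nu h K hinv ->
          ext_pos thh -> h_scaling h ah Ch thh ->
          forall (s t : R) (x y : vec), 0 < s -> 0 < t ->
            ext_lt (s + t) (inv_h_at h thh) ->
            Rmin (rho d K hinv s x) (rho d K hinv t y)
              <= c * rho d K hinv (s + t) (vadd x y)).
Proof.
  intros d ah Ch _ Hah _ HCh; split.
  - intros af cf Haf Hcf; exact (frak_min_rho_le_sum d ah Ch af cf Hah HCh Haf Hcf).
  - destruct (frak_min_rho_le_sum d ah Ch 1 1 Hah HCh (Rle_refl 1) (Rle_refl 1)) as [c [Hc Hmin]].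
    exists c; split; [exact Hc |].
    intros nu h K hinv thh LS Hthh Hsc s t x y Hs Ht Hth.
    pose proof (Hmin nu h K hinv thh (fun _ => 1) None LS Hthh Hsc I frak_cond_one
                  s t x y Hs Ht Hth I) as H1.
    rewrite !Rmult_1_l, Rmult_1_r in H1; exact H1.
Qed.
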